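(* For $r, p_{1}, p_{2}\in \mathbb N$, \begin{align*} \sum_{n=1}^\infty \frac{r H_n^{(p_{1})} H_n^{(p_{2})}}{n(n+r)} &=S_{p_{1},p_{2}+1}^{+,+}+S_{p_{2},p_{1}+1}^{+,+}-\zeta(p_{1}+p_{2}+1) +\sum_{b=1}^{r-1}S(p_{1},p_{2},1,b,0)\\ &\quad +\sum_{b=1}^{r-1}S(p_{2},p_{1},1,b,0) -\sum_{b=1}^{r-1}S(0,p_{1}+p_{2}+1,1,b,0)\,. \end{align*}
   Context: $H_n^{(q)}=\sum_{j=1}^n j^{-q}$ for $q\in\mathbb N$, and $H_n^{(0)}:=n$. For $q\in\mathbb Z_{\ge0}$... more precisely for $q\in\{0\}\cup\mathbb N$ and $m,t,b\in\mathbb N$, $S(q,m,t,b,0):=\sum_{n=1}^\infty\frac{H_n^{(q)}}{n^{m}(n+b)^{t}}$ (so $S(0,m,1,b,0)=\sum_{n\ge1}\frac{1}{n^{m-1}(n+b)}$). $S_{p,q}^{+,+}:=\sum_{n=1}^\infty H_n^{(p)}/n^q$. $\zeta$ is the Riemann zeta function. Empty sums are $0$. *)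

From Stdlib Require Import Reals.
From Coquelicot Require Import Coquelicot.
Open Scope R_scope.

(* H q n = sum_{j=1}^n j^{-q};  for q = 0 this gives n, matching H_n^{(0)} := n. *)
Fixpoint Hq (q n : nat) : R :=
  match n with
  | O => 0
  | S m => Hq q m + / (INR (S m) ^ q)
  end.

Fixpoint sum1 (f : nat -> R) (n : nat) : R :=
  match n with
  | O => 0
  | S m => sum1 f m + f (S m)
  end.

(* S(q,m,t,b,0) = sum_{n>=1} H_n^{(q)} / (n^m (n+b)^t)   (index shifted: n = k+1) *)
Definition S5 (q m t b : nat) : R :=
  Series (fun k => Hq q (S k) / (INR (S k) ^ m * (INR (S k) + INR b) ^ t)).

Definition Spp (p q : nat) : R :=
  Series (fun k => Hq p (S k) / INR (S k) ^ q).

Definition zeta (s : nat) : R :=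
  Series (fun k => / INR (S k) ^ s).

From Stdlib Require Import Reals Lra Lia.
From Coquelicot Require Import Coquelicot.
Open Scope R_scope.

(* Since r/(n(n+r)) = sum_{b<r} (1/(n+b) - 1/(n+b+1)), it suffices to sum
   a_n (1/(n+b) - 1/(n+b+1)) for each b, where a_n = H_n^(p1) H_n^(p2).  Abel
   summation against the decreasing weights 1/(n+b) turns this into
   sum_n (a_n - a_(n-1))/(n+b), and a_n - a_(n-1) = H_n^(p1)/n^p2 + H_n^(p2)/n^p1
   - 1/n^(p1+p2); the boundary term a_N/(N+b) vanishes because the transformed
   series converges.  The block b = 0 yields the S^{+,+} and zeta terms.  All the
   series involved are dominated by H_n^(1)/n^2, which is summable by the same
   Abel summation applied to sum_n 1/n^2. *)

Lemma INR_S_ge_1 (k : nat) : 1 <= INR (S k).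
Proof. rewrite S_INR. pose proof (pos_INR k). lra. Qed.

Lemma inv_sq_le_twice_inv_sub (x : R) : 1 <= x -> / x ^ 2 <= 2 * (/ x - / (x + 1)).
Proof.
  intro Hx.
  replace (2 * (/ x - / (x + 1))) with (/ ((x * x + x) / 2)) by (field; repeat split; nra).
  rewrite <- Rsqr_pow2. unfold Rsqr. apply Rinv_le_contravar; nra.
Qed.

Lemma Hq_succ (p n : nat) : Hq p (S n) = Hq p n + / INR (S n) ^ p.
Proof. reflexivity. Qed.

Lemma Hq_0 (n : nat) : Hq 0 n = INR n.
Proof. induction n as [|n IH]; [reflexivity|]. rewrite Hq_succ, IH, S_INR. simpl. field. Qed.

Lemma inv_pow_INR_S_pos (p n : nat) : 0 < / INR (S n) ^ p.
Proof. apply Rinv_0_lt_compat, pow_lt. pose proof (INR_S_ge_1 n). lra. Qed.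

Lemma Hq_le_succ (p n : nat) : Hq p n <= Hq p (S n).
Proof. rewrite Hq_succ. pose proof (inv_pow_INR_S_pos p n). lra. Qed.

Lemma Hq_nonneg (p n : nat) : 0 <= Hq p n.
Proof.
  induction n as [|n IH]; [simpl; lra|]. pose proof (Hq_le_succ p n). lra.
Qed.

Lemma Hq_le_Hq1 (p n : nat) : (1 <= p)%nat -> Hq p n <= Hq 1 n.
Proof.
  intro Hp. induction n as [|n IH]; [simpl; lra|]. rewrite !Hq_succ, pow_1.
  pose proof (INR_S_ge_1 n) as Hn. pose proof (Rle_pow _ 1 p Hn Hp). rewrite pow_1 in *.
  assert (/ INR (S n) ^ p <= / INR (S n)) by (apply Rinv_le_contravar; lra).
  lra.
Qed.

Lemma Hq1_ge_1 (n : nat) : 1 <= Hq 1 (S n).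
Proof.
  induction n as [|n IH]; [simpl; lra|]. pose proof (Hq_le_succ 1 (S n)). lra.
Qed.

Lemma is_series_iff_lim_sum_n (u : nat -> R) (l : R) :
  is_series u l <-> is_lim_seq (sum_n u) l.
Proof. reflexivity. Qed.

Lemma sum_n_telescope (u : nat -> R) (N : nat) :
  sum_n (fun k => u k - u (S k)) N = u O - u (S N).
Proof.
  induction N as [|N IH].
  - now rewrite sum_O.
  - rewrite sum_Sn, IH. unfold plus; simpl. ring.
Qed.

Lemma is_series_telescope (u : nat -> R) (l : R) :
  is_lim_seq u l -> is_series (fun k => u k - u (S k)) (u O - l).
Proof.
  intro Hu. apply is_series_iff_lim_sum_n.
  apply is_lim_seq_ext with (fun N => u O - u (S N)).
  { intro N. now rewrite sum_n_telescope. }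
  apply is_lim_seq_minus'; [apply is_lim_seq_const|].
  now apply (is_lim_seq_incr_1 u l).
Qed.

Section SummationByParts.

Variables a w : nat -> R.
Hypothesis a_0 : a O = 0.

Lemma sum_n_by_parts (N : nat) :
  sum_n (fun k => a (S k) * (w k - w (S k))) N =
  sum_n (fun k => (a (S k) - a k) * w k) N - a (S N) * w (S N).
Proof.
  induction N as [|N IH].
  - rewrite !sum_O, a_0. change (?x = ?y) with (@eq R x y). ring.
  - rewrite !sum_Sn, IH. unfold plus; simpl. ring.
Qed.

Hypothesis a_incr : forall k, a k <= a (S k).
Hypothesis w_nonneg : forall k, 0 <= w k.
Hypothesis w_decr : forall k, w (S k) <= w k.
Hypothesis w_lim_0 : is_lim_seq w 0.

Lemma by_parts_boundary_le (N0 N : nat) : (N0 <= N)%nat ->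
  (a (S N) - a (S N0)) * w N <=
  sum_n (fun k => (a (S k) - a k) * w k) N - sum_n (fun k => (a (S k) - a k) * w k) N0.
Proof.
  induction 1 as [|N HN IH].
  - lra.
  - rewrite sum_Sn. unfold plus; simpl.
    assert (a (S N0) <= a (S N)) by (apply Rge_le, growing_prop; [exact a_incr | lia]).
    assert ((a (S N) - a (S N0)) * w (S N) <= (a (S N) - a (S N0)) * w N)
      by (apply Rmult_le_compat_l; [lra | apply w_decr]).
    lra.
Qed.

Lemma by_parts_boundary_lim (L : R) :
  is_series (fun k => (a (S k) - a k) * w k) L ->
  is_lim_seq (fun N => a (S N) * w (S N)) 0.
Proof.
  intro HC. rewrite is_series_iff_lim_sum_n in HC. apply is_lim_seq_spec. intro eps.
  (* a_(N+1) w_(N+1) <= a_(N0+1) w_N + (C_N - C_N0): the first term is small for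
     large N, the second for large N0 since the partial sums C converge. *)
  destruct (proj2 (is_lim_seq_spec _ _) HC (pos_div_2 (pos_div_2 eps))) as [N0 HN0].
  assert (Hw : is_lim_seq (fun N => a (S N0) * w N) 0).
  { replace (Finite 0) with (Rbar_mult (a (S N0)) 0) by (simpl; f_equal; ring).
    now apply is_lim_seq_scal_l. }
  destruct (proj2 (is_lim_seq_spec _ _) Hw (pos_div_2 eps)) as [N1 HN1].
  exists (max N0 N1). intros N HN.
  specialize (HN1 N ltac:(lia)). pose proof (HN0 N ltac:(lia)) as HCN.
  pose proof (HN0 N0 (le_n _)) as HCN0. simpl in HN1, HCN, HCN0.
  pose proof (by_parts_boundary_le N0 N ltac:(lia)).
  assert (Ha : forall n, 0 <= a n)
    by (intro n; rewrite <- a_0; apply Rge_le, growing_prop; [exact a_incr | lia]).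
  assert (a (S N) * w (S N) <= a (S N) * w N)
    by (apply Rmult_le_compat_l; [apply Ha | apply w_decr]).
  pose proof (Rmult_le_pos _ _ (Ha (S N0)) (w_nonneg N)).
  pose proof (Rmult_le_pos _ _ (Ha (S N)) (w_nonneg (S N))).
  apply Rabs_lt_between in HN1. apply Rabs_lt_between in HCN. apply Rabs_lt_between in HCN0.
  apply Rabs_lt_between. lra.
Qed.

Lemma is_series_by_parts (L : R) :
  is_series (fun k => (a (S k) - a k) * w k) L ->
  is_series (fun k => a (S k) * (w k - w (S k))) L.
Proof.
  intro HC. pose proof (by_parts_boundary_lim L HC) as Hbd.
  rewrite is_series_iff_lim_sum_n in *.
  apply is_lim_seq_ext
    with (fun N => sum_n (fun k => (a (S k) - a k) * w k) N - a (S N) * w (S N)).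
  { intro N. now rewrite sum_n_by_parts. }
  replace L with (L - 0) by ring.
  now apply is_lim_seq_minus'.
Qed.

End SummationByParts.

Lemma Rdiv_le_compat (x y d e : R) : 0 <= x <= y -> 0 < d <= e -> x / e <= y / d.
Proof.
  intros Hxy Hde. unfold Rdiv. apply Rmult_le_compat; try lra.
  - left. apply Rinv_0_lt_compat. lra.
  - apply Rinv_le_contravar; lra.
Qed.

Lemma ex_series_le_nonneg (u v : nat -> R) :
  (forall k, 0 <= u k <= v k) -> ex_series v -> ex_series u.
Proof.
  intros Huv Hv. apply (@ex_series_le R_AbsRing R_CompleteNormedModule u v); [|exact Hv].
  intro k. change (norm (u k)) with (Rabs (u k)). rewrite Rabs_pos_eq; apply Huv.
Qed.

Lemma inv_INR_S_shift_pos (c : R) (k : nat) : 0 <= c -> 0 < / (INR (S k) + c).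
Proof. intro Hc. apply Rinv_0_lt_compat. pose proof (INR_S_ge_1 k). lra. Qed.

Lemma inv_INR_S_shift_decr (c : R) (k : nat) : 0 <= c ->
  / (INR (S (S k)) + c) <= / (INR (S k) + c).
Proof.
  intro Hc. pose proof (INR_S_ge_1 k). rewrite (S_INR (S k)).
  apply Rinv_le_contravar; lra.
Qed.

Lemma is_lim_seq_inv_INR_S_shift (c : R) : 0 <= c ->
  is_lim_seq (fun k => / (INR (S k) + c)) 0.
Proof.
  intro Hc. replace (Finite 0) with (Rbar_inv p_infty) by reflexivity.
  apply is_lim_seq_inv; [| discriminate].
  apply is_lim_seq_le_p_loc with (fun k => INR (S k)).
  - exists O. intros n _. lra.
  - apply (is_lim_seq_incr_1 INR). apply is_lim_seq_INR.
Qed.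

Lemma ex_series_inv_sq : ex_series (fun k => / INR (S k) ^ 2).
Proof.
  apply ex_series_le_nonneg with (fun k => 2 * (/ INR (S k) - / INR (S (S k)))).
  - intro k. pose proof (INR_S_ge_1 k). split.
    + left. apply Rinv_0_lt_compat, pow_lt. lra.
    + rewrite (S_INR (S k)). now apply inv_sq_le_twice_inv_sub.
  - apply (@ex_series_scal_l R_AbsRing R_NormedModule 2).
    eexists. apply (is_series_telescope (fun k => / INR (S k))).
    apply is_lim_seq_ext with (fun k => / (INR (S k) + 0)); [intro k; now rewrite Rplus_0_r|].
    apply is_lim_seq_inv_INR_S_shift. lra.
Qed.

Lemma ex_series_Hq1_div_sq : ex_series (fun k => Hq 1 (S k) / INR (S k) ^ 2).
Proof.
  destruct ex_series_inv_sq as [L HL].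
  assert (Hparts : is_series
            (fun k => Hq 1 (S k) * (/ (INR (S k) + 0) - / (INR (S (S k)) + 0))) L).
  { apply (is_series_by_parts (Hq 1) (fun k => / (INR (S k) + 0))).
    - reflexivity.
    - apply Hq_le_succ.
    - intro k. left. apply inv_INR_S_shift_pos. lra.
    - intro k. apply inv_INR_S_shift_decr. lra.
    - apply is_lim_seq_inv_INR_S_shift. lra.
    - eapply is_series_ext; [| exact HL]. intro k.
      rewrite Hq_succ, Rplus_0_r, pow_1. pose proof (INR_S_ge_1 k).
      change (?x = ?y) with (@eq R x y). field. lra. }
  apply ex_series_le_nonneg
    with (fun k => 2 * (Hq 1 (S k) * (/ (INR (S k) + 0) - / (INR (S (S k)) + 0)))).
  - intro k. pose proof (INR_S_ge_1 k). pose proof (Hq1_ge_1 k). split.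
    + unfold Rdiv. apply Rmult_le_pos; [lra|]. left. apply Rinv_0_lt_compat, pow_lt. lra.
    + rewrite !Rplus_0_r, (S_INR (S k)), <- Rmult_assoc, (Rmult_comm 2), Rmult_assoc.
      apply Rmult_le_compat_l; [lra|]. now apply inv_sq_le_twice_inv_sub.
  - apply (@ex_series_scal_l R_AbsRing R_NormedModule 2). now exists L.
Qed.

Definition S5_term (q m t b k : nat) : R :=
  Hq q (S k) / (INR (S k) ^ m * (INR (S k) + INR b) ^ t).

Lemma ex_series_S5_term (p q b : nat) : (1 <= p)%nat -> (1 <= q)%nat ->
  ex_series (S5_term p q 1 b).
Proof.
  intros Hp Hexp. apply ex_series_le_nonneg with (2 := ex_series_Hq1_div_sq). intro k.
  unfold S5_term. rewrite pow_1.
  pose proof (Hq_nonneg p (S k)). pose proof (Hq_le_Hq1 p (S k) Hp).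
  pose proof (INR_S_ge_1 k) as Hx. pose proof (pos_INR b).
  pose proof (Rle_pow _ 1 q Hx Hexp). set (x := INR (S k)) in *. simpl in *.
  split.
  - unfold Rdiv. apply Rmult_le_pos; [lra|]. left. apply Rinv_0_lt_compat. nra.
  - apply Rdiv_le_compat; [lra|]. split; nra.
Qed.

Lemma ex_series_S5_term_Hq0 (m b : nat) : (2 <= m)%nat -> ex_series (S5_term 0 m 1 b).
Proof.
  intro Hm. apply ex_series_le_nonneg with (2 := ex_series_Hq1_div_sq). intro k.
  unfold S5_term. rewrite pow_1, Hq_0.
  pose proof (Hq1_ge_1 k). pose proof (INR_S_ge_1 k) as Hx. pose proof (pos_INR b).
  pose proof (Rle_pow _ 2 m Hx Hm). set (x := INR (S k)) in *. simpl in *.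
  split.
  - unfold Rdiv. apply Rmult_le_pos; [lra|]. left. apply Rinv_0_lt_compat. nra.
  - apply Rle_trans with (x / (x * (x * 1) * x)).
    + apply Rdiv_le_compat; [lra|]. split; nra.
    + replace (x / (x * (x * 1) * x)) with (1 / (x * (x * 1))) by (field; lra).
      apply Rdiv_le_compat; nra.
Qed.

Lemma S5_at_zero_shift (p q : nat) : S5 p q 1 0 = Spp p (q + 1).
Proof.
  apply Series_ext. intro k. rewrite pow_1, Rplus_0_r, pow_add, pow_1. reflexivity.
Qed.

Lemma S5_Hq0_at_zero_shift (m : nat) : S5 0 m 1 0 = zeta m.
Proof.
  apply Series_ext. intro k. rewrite pow_1, Rplus_0_r, Hq_0.
  pose proof (INR_S_ge_1 k). assert (INR (S k) ^ m <> 0) by (apply pow_nonzero; lra).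
  field. lra.
Qed.

Lemma is_series_sum_n_telescope (c : nat -> R) (f : nat -> nat -> R) (V : nat -> R) :
  (forall b, is_series (fun k => c k * (f b k - f (S b) k)) (V b)) ->
  forall m, is_series (fun k => c k * (f O k - f (S m) k)) (sum_n V m).
Proof.
  intros HV m. induction m as [|m IH].
  - rewrite sum_O. apply HV.
  - rewrite sum_Sn. eapply is_series_ext; [| exact (is_series_plus _ _ _ _ IH (HV (S m)))].
    intro k. change (?x = ?y) with (@eq R x y). unfold plus; simpl. ring.
Qed.

Section HarmonicProduct.

Variables p1 p2 : nat.

Lemma Hq_prod_increment (b k : nat) :
  (Hq p1 (S k) * Hq p2 (S k) - Hq p1 k * Hq p2 k) * / (INR (S k) + INR b) =
  S5_term p1 p2 1 b k + S5_term p2 p1 1 b k - S5_term 0 (p1 + p2 + 1) 1 b k.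
Proof.
  unfold S5_term. rewrite Hq_0, !Hq_succ, !pow_1, !pow_add, pow_1.
  pose proof (INR_S_ge_1 k). pose proof (pos_INR b).
  assert (INR (S k) ^ p1 <> 0) by (apply pow_nonzero; lra).
  assert (INR (S k) ^ p2 <> 0) by (apply pow_nonzero; lra).
  field. repeat split; lra.
Qed.

Hypothesis hp1 : (1 <= p1)%nat.
Hypothesis hp2 : (1 <= p2)%nat.

Lemma is_series_Hq_prod_shift_diff (b : nat) :
  is_series
    (fun k => Hq p1 (S k) * Hq p2 (S k) * (/ (INR (S k) + INR b) - / (INR (S k) + INR (S b))))
    (S5 p1 p2 1 b + S5 p2 p1 1 b - S5 0 (p1 + p2 + 1) 1 b).
Proof.
  assert (Hpos : 0 <= INR b) by apply pos_INR.
  eapply is_series_ext.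
  2: apply (is_series_by_parts (fun k => Hq p1 k * Hq p2 k) (fun k => / (INR (S k) + INR b))).
  - intro k. cbv beta. rewrite (S_INR (S k)), (S_INR b). do 3 f_equal. ring.
  - simpl. ring.
  - intro k. apply Rmult_le_compat; auto using Hq_nonneg, Hq_le_succ.
  - intro k. left. now apply inv_INR_S_shift_pos.
  - intro k. now apply inv_INR_S_shift_decr.
  - now apply is_lim_seq_inv_INR_S_shift.
  - eapply is_series_ext; [intro k; symmetry; apply Hq_prod_increment|].
    exact (is_series_minus _ _ _ _
             (is_series_plus _ _ _ _
                (Series_correct _ (ex_series_S5_term p1 p2 b hp1 hp2))
                (Series_correct _ (ex_series_S5_term p2 p1 b hp2 hp1)))
             (Series_correct _ (ex_series_S5_term_Hq0 (p1 + p2 + 1) b ltac:(lia)))).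
Qed.

Lemma sum_n_S5_combination (m : nat) :
  sum_n (fun b => S5 p1 p2 1 b + S5 p2 p1 1 b - S5 0 (p1 + p2 + 1) 1 b) m =
  Spp p1 (p2 + 1) + Spp p2 (p1 + 1) - zeta (p1 + p2 + 1)
  + sum1 (fun b => S5 p1 p2 1 b) m
  + sum1 (fun b => S5 p2 p1 1 b) m
  - sum1 (fun b => S5 0 (p1 + p2 + 1) 1 b) m.
Proof.
  induction m as [|m IH].
  - rewrite sum_O, S5_Hq0_at_zero_shift, !S5_at_zero_shift. simpl. ring.
  - rewrite sum_Sn, IH. unfold plus; simpl. ring.
Qed.

End HarmonicProduct.

Theorem lemma7 (r p1 p2 : nat) (hr : (1 <= r)%nat) (hp1 : (1 <= p1)%nat) (hp2 : (1 <= p2)%nat) :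
  is_series
    (fun k => INR r * Hq p1 (S k) * Hq p2 (S k) / (INR (S k) * (INR (S k) + INR r)))
    (Spp p1 (p2 + 1) + Spp p2 (p1 + 1) - zeta (p1 + p2 + 1)
     + sum1 (fun b => S5 p1 p2 1 b) (r - 1)
     + sum1 (fun b => S5 p2 p1 1 b) (r - 1)
     - sum1 (fun b => S5 0 (p1 + p2 + 1) 1 b) (r - 1)).
Proof.
  destruct r as [|m]; [lia|]. replace (S m - 1)%nat with m by lia.
  rewrite <- sum_n_S5_combination.
  eapply is_series_ext.
  2: apply (is_series_sum_n_telescope (fun k => Hq p1 (S k) * Hq p2 (S k))
              (fun b k => / (INR (S k) + INR b))), is_series_Hq_prod_shift_diff; assumption.
  intro k. cbv beta. pose proof (INR_S_ge_1 k). pose proof (pos_INR (S m)).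
  change (INR 0) with 0. change (?x = ?y) with (@eq R x y). field. lra.
Qed.
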